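(* For every $h\ge 2$ there are $m_0=m_0(h)$ and $\gamma=\gamma(h)>0$ with the following property. Let $H$ be an oriented graph on $h$ vertices and let $D$ be an oriented graph on vertex set $[k]$, where $2\le k\le h$. Suppose that $H$ has a proper $k$-coloring $V(H)=H_1\cup\dots\cup H_k$ such that $H_i\rightarrow H_j$ for every $(i,j)\in E(D)$. Then for every $m\ge m_0$ there is a $k$-partite tournament $F=(V_1\cup\dots\cup V_k,E(F))$ such that: (1) $|V_i|=m$ for every $i=1,\dots,k$; (2) $V_i\rightarrow V_j$ for every $(i,j)\in E(D)$; (3) every completion of $F$ contains a collection of at least $\gamma m^2$ copies of $H$ with the property that every edge $e\in E(F)$ is contained in at most one of these copies.
   Context: An oriented graph is a directed graph without loops with at most one edge between any two distinct vertices. A proper $k$-coloring of an oriented graph $H$ is a partition of $V(H)$ into $k$ sets each inducing an acyclic digraph. For disjoint vertex sets $X,Y$ of a digraph, $X\rightarrow Y$ means there is no pair $(x,y)\in X\times Y$ with an edge from $y$ to $x$ (i.e. every edge between $X$ and $Y$ goes from $X$ to $Y$; non-adjacent pairs are allowed). A $k$-partite tournament is an orientation of a complete $k$-partite graph with parts $V_1,\dots,V_k$. A completion of a $k$-partite tournament $F$ is any tournament on $V(F)$ agreeing with $F$ on all edges between distinct parts, i.e. obtained from $F$ by adding arbitrary tournaments on $V_1,\dots,V_k$. A copy of $H$ is a (not necessarily induced) subgraph isomorphic to $H$. *)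

From mathcomp Require Import all_boot.
From Stdlib Require Export Reals.
Set Implicit Arguments.
Unset Strict Implicit.
Unset Printing Implicit Defensive.

Definition oriented (T : finType) (e : rel T) : Prop :=
  (forall x, ~~ e x x) /\ (forall x y, e x y -> ~~ e y x).

Definition acyclic_on (T : finType) (e : rel T) (S : pred T) : Prop :=
  forall s : seq T, s != [::] -> all S s -> ~~ cycle e s.

Definition proper_coloring (T : finType) (e : rel T) (k : nat) (c : T -> 'I_k) : Prop :=
  forall i : 'I_k, acyclic_on e (fun x => c x == i).

Definition arrow (T : finType) (e : rel T) (X Y : pred T) : Prop :=
  forall x y, X x -> Y y -> ~~ e y x.

(* A k-partite tournament with parts V_i = {i} x 'I_m (so |V_i| = m). *)
Definition kpartite_tournament (k m : nat) (eF : rel ('I_k * 'I_m)) : Prop :=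
  oriented eF /\
  (forall u v, u.1 = v.1 -> ~~ eF u v) /\
  (forall u v, u.1 <> v.1 -> eF u v || eF v u).

Definition completion (k m : nat) (eF eT : rel ('I_k * 'I_m)) : Prop :=
  oriented eT /\
  (forall u v, u <> v -> eT u v || eT v u) /\
  (forall u v, u.1 <> v.1 -> eT u v = eF u v).

Definition is_copy (h : nat) (V : finType) (eH : rel 'I_h) (eT : rel V)
  (phi : {ffun 'I_h -> V}) : Prop :=
  injective phi /\ (forall x y, eH x y -> eT (phi x) (phi y)).

Definition copy_vertices (h : nat) (V : finType) (phi : {ffun 'I_h -> V}) : {set V} :=
  [set phi x | x in 'I_h].

Definition copy_edges (h : nat) (V : finType) (eH : rel 'I_h) (phi : {ffun 'I_h -> V})
  : {set V * V} :=
  [set (phi p.1, phi p.2) | p in [set p : 'I_h * 'I_h | eH p.1 p.2]].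

From mathcomp Require Import all_boot zify.
From Stdlib Require Import Reals Lra.
Set Implicit Arguments.
Unset Strict Implicit.
Unset Printing Implicit Defensive.

(* First a finite gadget whose k parts are copies of the grid
   P = [n]^(2h), n depending only on h.  Inside a part a completion is
   arbitrary, but by the product Ramsey theorem each coordinate has a large set
   on which the completion orients all pairs of coordinatewise increasing
   points the same way.  Place every vertex x of H at a point of part c(x) so
   that within a colour class the coordinates follow a topological order of the
   class, read in that direction, and so that the two coordinates reserved for a
   vertex z tell z apart from the rest of its class when compared with points
   of other parts.  Cross edges of the gadget are defined by reading these
   coordinates, hence every completion of the gadget contains a copy of H.
   Second, blow the gadget up to parts of size m: for a, t < M ~ m / (k |P|)
   the map (i, p) |-> (i, block a + i t, position p) embeds the gadget, giving
   M^2 copies of H in every completion, one per line (a, t).  Two points in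
   different parts lie on at most one line, so these copies are edge-disjoint,
   and they are distinct once H meets two parts, which recolouring a source or a
   sink of H ensures. *)

(** * Ramsey theorems *)

Lemma pigeonhole_seq (X : Type) (C : finType) (c0 : C) (f : X -> C) (s : seq X) :
  exists c, size s <= #|C| * count (fun x => f x == c) s.
Proof.
have sum_count : \sum_(c : C) count (fun x => f x == c) s = size s.
  elim: s => [|x s IHs] /=; first by rewrite big1.
  rewrite big_split /= IHs (bigD1 (f x)) //= eqxx big1 ?addn0 // => c /negbTE.
  by rewrite eq_sym => ->.
exists [arg max_(c > c0) count (fun x => f x == c) s].
case: arg_maxnP => // c _ c_max; rewrite -sum_count -sum_nat_const.
by apply: leq_sum => c' _; exact: c_max.
Qed.

Fixpoint chain_bound (n r : nat) : nat :=
  if r is r'.+1 then n * chain_bound n r' + 1 else 0.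

Lemma greedy_chain (X : eqType) (lt : rel X) (C : finType) (c0 : C)
    (f : X -> X -> C) : transitive lt ->
  forall r (A : seq X), sorted lt A -> chain_bound #|C| r <= size A ->
  exists Z : seq (X * C), [/\ size Z = r, all (fun p => p.1 \in A) Z &
    pairwise (fun p q => lt p.1 q.1 && (f p.1 q.1 == p.2)) Z].
Proof.
move=> lt_tr; elim=> [|r IHr] A sortedA sizeA; first by exists [::].
case: A sortedA sizeA => [|a A] /= sortedA; first by rewrite addn1.
move=> sizeA.
have [c popular] := pigeonhole_seq c0 (f a) A.
pose A' := filter (fun x => f a x == c) A.
have sortedA' : sorted lt A' by apply/sorted_filter/(path_sorted sortedA).
have sizeA' : chain_bound #|C| r <= size A'.
  rewrite size_filter; move: sizeA; rewrite addn1 ltnS => /leq_trans/(_ popular).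
  by rewrite leq_mul2l => /orP [/eqP/card0_eq/(_ c)|].
have [Z [<- inA' chainZ]] := IHr A' sortedA' sizeA'.
exists ((a, c) :: Z); split=> //=.
  rewrite inE eqxx; apply/allP => p /(allP inA').
  by rewrite mem_filter inE orbC => /andP [_ ->].
rewrite chainZ andbT; apply/allP => p /(allP inA').
rewrite mem_filter => /andP [/eqP -> pA].
by rewrite eqxx andbT; exact: (allP (order_path_min lt_tr sortedA)).
Qed.

Lemma pairwise_mem2 (T : eqType) (r : rel T) (s : seq T) x y :
  pairwise r s -> x \in s -> y \in s -> [\/ x = y, r x y | r y x].
Proof.
elim: s => [|a s IHs] //= /andP [/allP ra rs].
rewrite !inE => /orP [/eqP -> | xs] /orP [/eqP -> | ys]; first by constructor.
- by constructor 2; exact: ra.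
- by constructor 3; exact: ra.
- exact: IHs.
Qed.

Lemma ramsey_ordered_pairs (L : nat) (C : finType) : exists N0, forall N, N0 <= N ->
  forall g : 'I_N -> 'I_N -> C, exists2 S : {set 'I_N}, L <= #|S| &
  exists col, forall s t, s \in S -> t \in S -> s < t -> g s t = col.
Proof.
exists (chain_bound #|C| (#|C| * L)).+1 => -[//|N] N_ge g.
have c0 := g ord0 ord0.
have sorted_ord : sorted (fun s t : 'I_N.+1 => s < t) (enum 'I_N.+1).
  by have := iota_ltn_sorted 0 N.+1; rewrite -val_enum_ord sorted_map.
have lt_tr : transitive (fun s t : 'I_N.+1 => s < t) by move=> ? ? ?; apply: ltn_trans.
have [|Z [sizeZ _ chainZ]] := greedy_chain c0 g lt_tr (r := #|C| * L) sorted_ord.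
  by rewrite size_enum_ord ltnW.
have [c popular] := pigeonhole_seq c0 snd Z.
pose Zc := filter (fun p => p.2 == c) Z.
have chainZc := pairwise_filter (fun p => p.2 == c) chainZ.
have uniqZc : uniq (map fst Zc).
  apply: (@pairwise_uniq _ (fun s t : 'I_N.+1 => s < t)) => [x|]; first by rewrite ltnn.
  by rewrite pairwise_map; apply: sub_pairwise chainZc => p q /andP [].
exists [set x in map fst Zc].
  rewrite cardsE (card_uniqP uniqZc) size_map size_filter.
  by move: popular; rewrite sizeZ leq_mul2l => /orP [/eqP/card0_eq/(_ c)|].
exists c => s t; rewrite !inE => /mapP [p pZ ->] /mapP [q qZ ->] pq.
case: (pairwise_mem2 chainZc pZ qZ) => [E | /andP [_ /eqP ->] | /andP [qp _]].
- by move: pq; rewrite E ltnn.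
- by move: pZ; rewrite mem_filter => /andP [/eqP].
- by move: (ltn_trans pq qp); rewrite ltnn.
Qed.

Lemma widen_ord_inj (n m : nat) (le_nm : n <= m) : injective (widen_ord le_nm).
Proof. by move=> i j /(congr1 val) /= /val_inj. Qed.

Lemma product_ramsey (d L : nat) (C : finType) : exists N0, forall N, N0 <= N ->
  forall chi : {ffun 'I_d -> 'I_N} -> {ffun 'I_d -> 'I_N} -> C,
  exists2 S : 'I_d -> {set 'I_N}, forall l, L <= #|S l| &
  exists col, forall p q : {ffun 'I_d -> 'I_N},
    (forall l, p l \in S l) -> (forall l, q l \in S l) ->
    (forall l, p l < q l) -> chi p q = col.
Proof.
elim: d C => [|d IHd] C.
  exists 0 => N _ chi; exists (fun _ => set0) => [[]//|].
  have all_eq (p : {ffun 'I_0 -> 'I_N}) : p = ffun0 (card_ord 0) by apply/ffunP => -[].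
  exists (chi (ffun0 (card_ord 0)) (ffun0 (card_ord 0))) => p q *.
  by rewrite (all_eq p) (all_eq q).
have [N' HN'] := IHd C.
pose C' := {ffun {ffun 'I_d -> 'I_N'} * {ffun 'I_d -> 'I_N'} -> C}.
have [N1 HN1] := ramsey_ordered_pairs L C'.
exists (maxn N' N1) => N; rewrite geq_max => /andP [N'_le N1_le] chi.
pose cons (s : 'I_N) (p : {ffun 'I_d -> 'I_N'}) : {ffun 'I_d.+1 -> 'I_N} :=
  [ffun l => if unlift ord0 l is Some l' then widen_ord N'_le (p l') else s].
(* A pair of first coordinates is coloured by the whole colouring it induces
   on the remaining coordinates. *)
pose g (s t : 'I_N) : C' := [ffun pq => chi (cons s pq.1) (cons t pq.2)].
have [S0 S0_big [col0 S0_hom]] := HN1 N N1_le g.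
have [S' S'_big [col S'_hom]] := HN' N' (leqnn _) (fun p q => col0 (p, q)).
pose S (l : 'I_d.+1) : {set 'I_N} :=
  if unlift ord0 l is Some l' then widen_ord N'_le @: S' l' else S0.
exists S => [l|].
  rewrite /S; case: unliftP => [l' _|_] //.
  by rewrite card_imset //; exact: widen_ord_inj.
have uncons (r : {ffun 'I_d.+1 -> 'I_N}) : (forall l, r l \in S l) ->
    exists2 r' : {ffun 'I_d -> 'I_N'}, forall l', r' l' \in S' l' &
      r = cons (r ord0) r'.
  move=> rS.
  have /fin_all_exists [f Hf] : forall l', exists x : 'I_N',
      x \in S' l' /\ widen_ord N'_le x = r (lift ord0 l').
    move=> l'; have := rS (lift ord0 l'); rewrite /S liftK.
    by case/imsetP => x xS ->; exists x.
  exists [ffun l' => f l'] => [l'|]; first by rewrite ffunE; case: (Hf l').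
  apply/ffunP => l; rewrite !ffunE; case: unliftP => [l' ->|->] //.
  by rewrite ffunE; case: (Hf l').
exists col => p q pS qS pq.
have [p' p'S Ep] := uncons p pS.
have [q' q'S Eq] := uncons q qS.
have: g (p ord0) (q ord0) = col0.
  by move: (pS ord0) (qS ord0) (pq ord0); rewrite /S unlift_none; exact: S0_hom.
move=> /ffunP /(_ (p', q')); rewrite ffunE /= -Ep -Eq => ->.
apply: S'_hom => // l'; move: (pq (lift ord0 l')).
by rewrite Ep Eq !ffunE liftK.
Qed.

(** * Topological ranks and colourings *)

Section TopologicalRank.
Variables (T : finType) (e : rel T).
Hypothesis e_acyclic : forall s : seq T, s != [::] -> ~~ cycle e s.

Definition ancestors (x : T) : {set T} := [set z | connect e z x].

Lemma ancestors_proper x y : e x y -> ancestors x \proper ancestors y.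
Proof.
move=> exy; apply/properP; split.
  by apply/subsetP => z; rewrite !inE => /connect_trans; apply; exact: connect1.
exists y; rewrite !inE ?connect0 //; apply/negP => /connectP [p p_path p_last].
have := e_acyclic (s := y :: p) isT; rewrite /= rcons_path p_path -p_last.
by rewrite exy.
Qed.

Definition topo_rank (x : T) : nat := #|ancestors x| * #|T| + enum_rank x.

Lemma topo_rank_lt x : topo_rank x < #|T|.+1 * #|T|.
Proof.
have := leq_mul (max_card (ancestors x)) (leqnn #|T|).
have : enum_rank x < #|T| := ltn_ord _.
rewrite /topo_rank; lia.
Qed.

Lemma topo_rank_inj : injective topo_rank.
Proof.
move=> x y /(congr1 (modn^~ #|T|)); rewrite /topo_rank !modnMDl !modn_small //.
by move/val_inj/enum_rank_inj.
Qed.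

Lemma topo_rank_homo x y : e x y -> topo_rank x < topo_rank y.
Proof.
move/ancestors_proper/proper_card => anc_lt.
have : enum_rank x < #|T| := ltn_ord _.
have := leq_mul anc_lt (leqnn #|T|); rewrite /topo_rank mulSn; lia.
Qed.

Lemma acyclic_sink (x0 : T) : exists z, forall y, ~~ e z y.
Proof.
exists [arg max_(z > x0) topo_rank z] => y; case: arg_maxnP => // z _ z_max.
by apply/negP => /topo_rank_homo; apply/negP; rewrite -leqNgt; exact: z_max.
Qed.

Lemma acyclic_source (x0 : T) : exists z, forall y, ~~ e y z.
Proof.
exists [arg min_(z < x0) topo_rank z] => y; case: arg_minnP => // z _ z_min.
by apply/negP => /topo_rank_homo; apply/negP; rewrite -leqNgt; exact: z_min.
Qed.

End TopologicalRank.

Definition respects_digraph (T : finType) (k : nat) (eH : rel T) (eD : rel 'I_k)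
    (c : T -> 'I_k) : Prop :=
  forall i j, eD i j -> arrow eH (fun x => c x == i) (fun x => c x == j).

Definition class_rel (T : finType) (K : eqType) (e : rel T) (c : T -> K) : rel T :=
  [rel x y | e x y && (c x == c y)].

Lemma class_rel_acyclic (T : finType) (k : nat) (e : rel T) (c : T -> 'I_k) :
  proper_coloring e c -> forall s, s != [::] -> ~~ cycle (class_rel e c) s.
Proof.
move=> pc [//|a s] _; apply/negP => cyc.
have path_class b p :
    c b = c a -> path (class_rel e c) b p -> all (fun x => c x == c a) p.
  elim: p b => [//|x p IHp] b /= cb /andP [/andP [_ /eqP cbx] xp].
  by rewrite -cbx cb eqxx; apply: IHp xp; rewrite -cbx.
have all_class : all (fun x => c x == c a) (a :: s).
  by move: cyc; rewrite /= rcons_path eqxx => /andP [/(path_class a) -> //].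
have /negP := pc (c a) (a :: s) isT all_class; apply.
by apply: sub_cycle cyc => x y /andP [].
Qed.

Lemma exists_neq (T : finType) (x : T) : 1 < #|T| -> exists y, y != x.
Proof.
move=> T2; case: (pickP (predC1 x)) => [y yx|all_x]; first by exists y.
move: T2; rewrite ltnNge => /fintype_le1P [] y z.
by have /negbFE/eqP -> := all_x y; have /negbFE/eqP -> := all_x z.
Qed.

Lemma exists_nonconstant_coloring (T : finType) (k : nat) (eH : rel T)
    (eD : rel 'I_k) (c : T -> 'I_k) :
  1 < k -> 1 < #|T| -> oriented eD -> proper_coloring eH c ->
  respects_digraph eH eD c ->
  exists c' : T -> 'I_k, exists x y,
    [/\ proper_coloring eH c', respects_digraph eH eD c' & c' x != c' y].
Proof.
move=> k2 T2 oD pc resp.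
have [x0 _] := card_gt0P (ltnW T2).
case: (pickP [pred xy : T * T | c xy.1 != c xy.2]) => [[x y] cxy|c_const].
  by exists c, x, y.
have cc x : c x = c x0 by apply/eqP/negbFE/(c_const (x, x0)).
have H_acyclic s : s != [::] -> ~~ cycle eH s.
  by move=> sn; apply: pc sn _; apply/allP => x _; rewrite cc.
have [j ji] : exists j, j != c x0 by apply: exists_neq; rewrite card_ord.
have [snk snkP] := acyclic_sink H_acyclic x0.
have [src srcP] := acyclic_source H_acyclic x0.
(* H lies in one class; recolouring a source (if j -> c x0 in D) or a sink
   (otherwise) with j keeps the colouring compatible with D. *)
pose z := if eD j (c x0) then src else snk.
pose c' x := if x == z then j else c x0.
have [w wz] := exists_neq z T2.
exists c', z, w; split => [t s sn _|a b eab x y|]; first exact: H_acyclic.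
  move: eab; rewrite /c'; case: (x =P z) => [->|_]; case: (y =P z) => [->|_] eab
    /eqP ea /eqP eb; subst a b; rewrite ?(negbTE (oD.1 _)) // in eab.
  - by rewrite /z eab.
  - by rewrite /z (negbTE (oD.2 _ _ eab)).
by rewrite /c' eqxx (negbTE wz).
Qed.

(** * The gadget *)

Section Gadget.
Variables (h k n : nat) (eH : rel 'I_h) (eD : rel 'I_k) (c : 'I_h -> 'I_k).

Definition nested_at (z : 'I_h) (p q : {ffun 'I_(h + h) -> 'I_n}) : bool :=
  (q (lshift h z) < p (lshift h z)) && (p (rshift h z) < q (rshift h z)).

Definition back_edge_witness (i : 'I_k) p (j : 'I_k) q : bool :=
  [exists z, exists w,
    [&& c z == i, c w == j, nested_at z p q, nested_at w q p & eH w z]].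

(* Between parts not joined in D, edges follow the order of the parts, except
   between points certified by nested coordinates to carry the ends of an edge
   of H pointing backwards. *)
Definition gadget : rel ('I_k * {ffun 'I_(h + h) -> 'I_n}) := fun u v =>
  if u.1 == v.1 then false
  else if eD u.1 v.1 then true
  else if eD v.1 u.1 then false
  else if u.1 < v.1 then ~~ back_edge_witness u.1 u.2 v.1 v.2
  else back_edge_witness v.1 v.2 u.1 u.2.

Lemma gadget_same_part u v : u.1 = v.1 -> gadget u v = false.
Proof. by move=> E; rewrite /gadget E eqxx. Qed.

Lemma gadget_total u v : u.1 <> v.1 -> gadget u v || gadget v u.
Proof.
move=> /eqP ne; rewrite /gadget (negbTE ne) eq_sym (negbTE ne).
case: (eD u.1 v.1) => //; case: (eD v.1 u.1) => //.
case: (ltngtP u.1 v.1) => [||/val_inj uv]; rewrite ?orbN ?orNb //.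
by rewrite uv eqxx in ne.
Qed.

Hypothesis oD : oriented eD.

Lemma gadget_anti u v : gadget u v -> ~~ gadget v u.
Proof.
rewrite /gadget eq_sym; case: eqP => // /eqP ne.
case eD_uv: (eD u.1 v.1); first by rewrite (negbTE (oD.2 _ _ eD_uv)).
case: (eD v.1 u.1) => //.
case: (ltngtP u.1 v.1) => [||/val_inj uv]; rewrite ?negbK //.
by rewrite uv eqxx in ne.
Qed.

Lemma gadget_respects i j u v : eD i j -> u.1 = i -> v.1 = j -> ~~ gadget v u.
Proof.
move=> eij ui vj; subst i j; rewrite /gadget; case: eqP => // _.
by rewrite (negbTE (oD.2 _ _ eij)) eij.
Qed.

End Gadget.

Lemma nth_enum_set_ltn (N : nat) (A : {set 'I_N}) (x0 : 'I_N) :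
  {in [pred i | i < #|A|] &,
    forall i j, (nth x0 (enum A) i < nth x0 (enum A) j) = (i < j)}.
Proof.
have lt_tr : transitive (fun a b : 'I_N => a < b) by move=> ? ? ?; exact: ltn_trans.
have sortedA : sorted (fun a b : 'I_N => a < b) (enum A).
  have -> : enum A = filter (mem A) (enum 'I_N) by rewrite enumT.
  apply: (sorted_filter lt_tr).
  by have := iota_ltn_sorted 0 N; rewrite -val_enum_ord sorted_map.
apply: (@leqW_mono_in (fun i => val (nth x0 (enum A) i))); apply: leq_mono_in.
move=> i j; rewrite !inE cardE => iA jA; exact: (sorted_ltn_nth lt_tr x0 sortedA).
Qed.

Section Placement.
Variables (h k n W : nat) (c : 'I_h -> 'I_k) (sk : 'I_h -> nat).
Variable S : 'I_(h + h) -> {set 'I_n.+1}.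
Hypothesis sk_lt : forall x, sk x < W.
Hypothesis sk_inj : forall x y, c x = c y -> sk x = sk y -> x = y.
Hypothesis S_big : forall l, 2 * W * W.+1 <= #|S l|.

(* In the two coordinates of z, the class of z sits at the middles of the
   blocks given by sk, while every other vertex sits inside the block of z,
   below its middle in the first coordinate and above it in the second.  So an
   outside vertex brackets z and no other vertex of its class (nested_at_place),
   and each class keeps the order of sk. *)
Definition coord_value (l : 'I_(h + h)) (x : 'I_h) : nat :=
  match fintype.split l with
  | inl z => if c x == c z then 2 * W * sk x + W else 2 * W * sk z + sk x
  | inr z => if c x == c z then 2 * W * sk x + W else 2 * W * sk z + W + 1 + sk x
  end.

Lemma coord_value_lt l x : coord_value l x < 2 * W * W.+1.
Proof.
have := sk_lt x; rewrite /coord_value; case: (fintype.split l) => z; have := sk_lt z;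
  case: (c x == c z); nia.
Qed.

Lemma coord_value_lt_class l x y : c x = c y ->
  (coord_value l x < coord_value l y) = (sk x < sk y).
Proof.
move=> cxy; have W0 : 0 < 2 * W by have := sk_lt x; lia.
rewrite /coord_value cxy.
case: (fintype.split l) => z; case: (c y == c z);
  by rewrite ?ltn_add2l // ltn_add2r ltn_pmul2l.
Qed.

Definition place (x : 'I_h) : {ffun 'I_(h + h) -> 'I_n.+1} :=
  [ffun l => nth ord0 (enum (S l)) (coord_value l x)].

Lemma place_in x l : place x l \in S l.
Proof.
rewrite ffunE -mem_enum mem_nth // -cardE.
exact: leq_trans (coord_value_lt l x) (S_big l).
Qed.

Lemma place_lt x y l : (place x l < place y l) = (coord_value l x < coord_value l y).
Proof.
rewrite !ffunE nth_enum_set_ltn // inE; exact: leq_trans (coord_value_lt _ _) (S_big l).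
Qed.

Lemma place_lt_class x y l : c x = c y -> (place x l < place y l) = (sk x < sk y).
Proof. by move=> cxy; rewrite place_lt coord_value_lt_class. Qed.

Lemma place_inj_class x y : c x = c y -> place x = place y -> x = y.
Proof.
move=> cxy pxy; apply: sk_inj => //.
have := place_lt_class (lshift h x) cxy; have := place_lt_class (lshift h x) (esym cxy).
rewrite pxy ltnn => /esym/negbT yx /esym/negbT xy; lia.
Qed.

Lemma nested_at_place z a b : c a != c b -> c z = c a ->
  nested_at z (place a) (place b) = (z == a).
Proof.
move=> cab cza; rewrite /nested_at !place_lt /coord_value.
rewrite (unsplitK (inl _ z)) (unsplitK (inr _ z)) -cza eqxx cza eq_sym (negbTE cab).
have sb_lt := sk_lt b; apply/idP/eqP => [window|->]; last by lia.
apply: sk_inj => //; case: (ltngtP (sk z) (sk a)) => //; nia.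
Qed.

End Placement.

Section GadgetCopy.
Variables (h k n W : nat) (eH : rel 'I_h) (eD : rel 'I_k) (c : 'I_h -> 'I_k).
Variables (sk : 'I_h -> nat) (S : 'I_(h + h) -> {set 'I_n.+1}) (beta : 'I_k -> bool).
Variable T : rel ('I_k * {ffun 'I_(h + h) -> 'I_n.+1}).
Hypothesis oH : oriented eH.
Hypothesis resp : respects_digraph eH eD c.
Hypothesis sk_lt : forall x, sk x < W.
Hypothesis sk_inj : forall x y, c x = c y -> sk x = sk y -> x = y.
Hypothesis sk_homo : forall x y, eH x y -> c x = c y ->
  if beta (c x) then sk x < sk y else sk y < sk x.
Hypothesis S_big : forall l, 2 * W * W.+1 <= #|S l|.
Hypothesis T_total : forall u v, u <> v -> T u v || T v u.
Hypothesis T_cross : forall u v, u.1 <> v.1 -> T u v = gadget eH eD c u v.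
Hypothesis T_hom : forall j (p q : {ffun _ -> _}),
  (forall l, p l \in S l) -> (forall l, q l \in S l) -> (forall l, p l < q l) ->
  T (j, p) (j, q) = beta j.

Local Notation place := (place W c sk S).

Lemma gadget_place_edge x y : eH x y -> c x != c y ->
  gadget eH eD c (c x, place x) (c y, place y).
Proof.
move=> exy cxy; rewrite /gadget /= (negbTE cxy).
case: (eD (c x) (c y)) => //; case eyx: (eD (c y) (c x)).
  by have := resp eyx (eqxx (c y)) (eqxx (c x)); rewrite exy.
have cyx : c y != c x by rewrite eq_sym.
case: ltnP => _.
  apply/existsP => -[z /existsP [w /and5P [/eqP cz /eqP cw]]].
  rewrite !nested_at_place // => /eqP -> /eqP -> eyx'.
  by have := oH.2 _ _ exy; rewrite eyx'.
apply/existsP; exists y; apply/existsP; exists x.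
by rewrite !eqxx !nested_at_place // !eqxx exy.
Qed.

Lemma T_place_edge_class x y : eH x y -> c x = c y -> T (c x, place x) (c y, place y).
Proof.
move=> exy cxy; have := sk_homo exy cxy; rewrite -cxy.
case beta_x: (beta (c x)) => sk_xy.
  by rewrite T_hom ?beta_x // => l; rewrite ?place_in // place_lt_class.
have yx l : place y l < place x l by rewrite place_lt_class.
have T_yx : T (c x, place y) (c x, place x) = false.
  by rewrite T_hom ?beta_x // => l; rewrite place_in.
have := T_total (u := (c x, place y)) (v := (c x, place x)); rewrite T_yx; apply.
by case=> /ffunP /(_ (lshift h x)) pyx; move: (yx (lshift h x)); rewrite pyx ltnn.
Qed.

Lemma place_copy : is_copy eH T [ffun x => (c x, place x)].
Proof.
split=> [x y|x y exy]; rewrite !ffunE.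
  by case=> cxy /(place_inj_class sk_lt sk_inj S_big cxy).
have [cxy|cxy] := eqVneq (c x) (c y); first exact: T_place_edge_class.
by rewrite T_cross /=; [exact: gadget_place_edge | exact/eqP].
Qed.

End GadgetCopy.

Lemma signed_class_rank (h k : nat) (eH : rel 'I_h) (c : 'I_h -> 'I_k)
    (beta : 'I_k -> bool) : proper_coloring eH c ->
  exists sk : 'I_h -> nat, [/\ forall x, sk x < h.+1 * h,
    forall x y, c x = c y -> sk x = sk y -> x = y &
    forall x y, eH x y -> c x = c y ->
      if beta (c x) then sk x < sk y else sk y < sk x].
Proof.
move=> pc; pose r := topo_rank (class_rel eH c).
have r_lt x : r x < h.+1 * h.
  by have := topo_rank_lt (class_rel eH c) x; rewrite card_ord.
exists (fun x => if beta (c x) then r x else (h.+1 * h).-1 - r x); split.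
- by move=> x; have := r_lt x; case: (beta _); lia.
- move=> x y cxy; rewrite cxy; have := r_lt x; have := r_lt y.
  case: (beta _) => /= ? ? ?; apply: (@topo_rank_inj _ (class_rel eH c));
    by rewrite -/(r x) -/(r y); lia.
- move=> x y exy cxy; rewrite -cxy.
  have xy : class_rel eH c x y by rewrite /class_rel /= exy cxy eqxx.
  have := topo_rank_homo (class_rel_acyclic pc) xy; rewrite -/(r x) -/(r y).
  by have := r_lt y; case: (beta _); lia.
Qed.

Theorem gadget_completion_copy (h : nat) : exists n, forall k (eH : rel 'I_h)
    (eD : rel 'I_k) (c : 'I_h -> 'I_k),
  k <= h -> oriented eH -> proper_coloring eH c -> respects_digraph eH eD c ->
  forall T : rel ('I_k * {ffun 'I_(h + h) -> 'I_n.+1}),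
  (forall u v, u <> v -> T u v || T v u) ->
  (forall u v, u.1 <> v.1 -> T u v = gadget eH eD c u v) ->
  exists psi, is_copy eH T psi /\ forall x, (psi x).1 = c x.
Proof.
pose W := h.+1 * h.
have [N0 ramsey] := product_ramsey (h + h) (2 * W * W.+1) {set 'I_h}.
exists N0 => k eH eD c kh oH pc resp T T_total T_cross.
pose chi p q : {set 'I_h} := [set widen_ord kh j | j in [pred j | T (j, p) (j, q)]].
have [S S_big [col S_hom]] := ramsey N0.+1 (leqnSn _) chi.
pose beta j := widen_ord kh j \in col.
have T_hom j (p q : {ffun 'I_(h + h) -> 'I_N0.+1}) :
    (forall l, p l \in S l) -> (forall l, q l \in S l) -> (forall l, p l < q l) ->
    T (j, p) (j, q) = beta j.
  move=> pS qS pq; rewrite /beta -(S_hom p q pS qS pq) mem_imset //.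
  exact: widen_ord_inj.
have [sk [sk_lt sk_inj sk_homo]] := signed_class_rank beta pc.
exists [ffun x => (c x, place W c sk S x)]; split; last by move=> x; rewrite ffunE.
exact: (place_copy oH resp sk_lt sk_inj sk_homo S_big T_total T_cross T_hom).
Qed.

(** * Blowing up the gadget *)

Lemma eq_affine_two_points (i j a t a' t' : nat) : i != j ->
  a + i * t = a' + i * t' -> a + j * t = a' + j * t' -> a = a' /\ t = t'.
Proof.
move=> ij Ei Ej; suff t_eq : t = t' by split=> //; move: Ei; rewrite t_eq => /addIn.
have [lt_ij|lt_ji|/eqP] := ltngtP i j; last by rewrite (negbTE ij).
  by apply/eqP; rewrite -(@eqn_pmul2l (j - i)) ?subn_gt0 //; apply/eqP; nia.
by apply/eqP; rewrite -(@eqn_pmul2l (i - j)) ?subn_gt0 //; apply/eqP; nia.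
Qed.

Lemma count_le1_uniq (T : eqType) (a : pred T) (s : seq T) : uniq s ->
  {in s &, forall x y, a x -> a y -> x = y} -> count a s <= 1.
Proof.
move=> s_uniq a_eq; rewrite -size_filter.
have := filter_uniq a s_uniq; have mem_as x : x \in filter a s -> a x /\ x \in s.
  by rewrite mem_filter => /andP.
case: (filter a s) mem_as => [|x [|y t]] //= mem_as /andP [].
have [ax xs] := mem_as x (mem_head _ _).
have [ay ys] : a y /\ y \in s by apply: mem_as; rewrite !inE eqxx orbT.
by rewrite inE (a_eq x y xs ys ax ay) eqxx.
Qed.

Section Blowup.
Variables (P : finType) (h k : nat) (eH : rel 'I_h) (eD : rel 'I_k) (c : 'I_h -> 'I_k).
Variable G : rel ('I_k * P).
Hypothesis G_same_part : forall u v, u.1 = v.1 -> G u v = false.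
Hypothesis G_anti : forall u v, G u v -> ~~ G v u.
Hypothesis G_total : forall u v, u.1 <> v.1 -> G u v || G v u.
Hypothesis G_respects : forall i j u v, eD i j -> u.1 = i -> v.1 = j -> ~~ G v u.
Hypothesis G_copy : forall T : rel ('I_k * P),
  (forall u v, u <> v -> T u v || T v u) ->
  (forall u v, u.1 <> v.1 -> T u v = G u v) ->
  exists psi : {ffun 'I_h -> 'I_k * P}, is_copy eH T psi /\ forall x, (psi x).1 = c x.
Variables (x0 y0 : 'I_h).
Hypothesis c_x0y0 : c x0 != c y0.
Hypothesis P_gt0 : 0 < #|P|.
Variable m : nat.

Definition block_point (u : 'I_m) : P := enum_val (Ordinal (ltn_pmod u P_gt0)).

Definition blowup : rel ('I_k * 'I_m) :=
  fun u v => G (u.1, block_point u.2) (v.1, block_point v.2).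

Let M := m %/ (k * #|P|).

Lemma line_point_proof (z : 'I_M * 'I_M) (u : 'I_k * P) :
  (z.1 + u.1 * z.2) * #|P| + enum_rank u.2 < m.
Proof.
have : enum_rank u.2 < #|P| := ltn_ord _.
have : z.1 + u.1 * z.2 < k * M.
  by have := ltn_ord z.1; have := ltn_ord z.2; have := ltn_ord u.1; nia.
have := leq_divM m (k * #|P|); rewrite -/M; nia.
Qed.

(* The line (a, t) meets part i in block a + i t; each block is a copy of P. *)
Definition line_point (z : 'I_M * 'I_M) (u : 'I_k * P) : 'I_k * 'I_m :=
  (u.1, Ordinal (line_point_proof z u)).

Lemma line_point_eq z z' u u' : line_point z u = line_point z' u' ->
  u = u' /\ z.1 + u.1 * z.2 = z'.1 + u.1 * z'.2.
Proof.
move=> [E1 E2]; rewrite -E1 in E2 *.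
have r_lt (w : P) : enum_rank w < #|P| := ltn_ord _.
have := congr1 (divn^~ #|P|) E2; have := congr1 (modn^~ #|P|) E2.
rewrite !divnMDl // !modnMDl !divn_small ?modn_small // !addn0.
move=> /val_inj/enum_rank_inj.
by case: u u' E1 {E2} => [i p] [i' p'] /= -> ->.
Qed.

Lemma line_point_inj z : injective (line_point z).
Proof. by move=> u u' /line_point_eq []. Qed.

Lemma line_point_line z z' u v u' v' : u.1 != v.1 ->
  line_point z u = line_point z' u' -> line_point z v = line_point z' v' -> z = z'.
Proof.
move=> uv /line_point_eq [_ Eu] /line_point_eq [_ Ev].
have [a_eq t_eq] := eq_affine_two_points uv Eu Ev.
by case: z z' a_eq t_eq {Eu Ev} => [a t] [a' t'] /= /val_inj -> /val_inj ->.
Qed.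

Lemma block_point_line z u : block_point (line_point z u).2 = u.2.
Proof.
rewrite /block_point -[RHS]enum_rankK; congr enum_val; apply: val_inj => /=.
by rewrite modnMDl modn_small.
Qed.

Lemma blowup_line z u v : blowup (line_point z u) (line_point z v) = G u v.
Proof. by rewrite /blowup !block_point_line; case: u v => [? ?] [? ?]. Qed.

Lemma blowup_kpartite : kpartite_tournament blowup.
Proof.
split; [split|split] => [u|u v|u v uv|u v uv]; rewrite /blowup.
- by rewrite G_same_part.
- exact: G_anti.
- by rewrite G_same_part.
- exact: G_total.
Qed.

Lemma blowup_respects i j :
  eD i j -> arrow blowup (fun u => u.1 == i) (fun u => u.1 == j).
Proof.
by move=> eij u v /eqP ui /eqP vj; apply: (G_respects (u := (_, _)) (v := (_, _)) eij).
Qed.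

Lemma blowup_completion_copies (eT : rel ('I_k * 'I_m)) : completion blowup eT ->
  exists s : seq {ffun 'I_h -> 'I_k * 'I_m},
    [/\ forall phi, phi \in s -> is_copy eH eT phi,
        uniq [seq (copy_vertices phi, copy_edges eH phi) | phi <- s],
        size s = M * M &
        forall u v, blowup u v ->
          count (fun phi => (u, v) \in copy_edges eH phi) s <= 1].
Proof.
move=> [_ [eT_total eT_agree]].
have /fin_all_exists [psi psiP] (z : 'I_M * 'I_M) :
    exists psi : {ffun 'I_h -> 'I_k * P},
    is_copy eH (fun u v => eT (line_point z u) (line_point z v)) psi /\
    forall x, (psi x).1 = c x.
  apply: G_copy => [u v uv|u v uv]; first by apply: eT_total => /line_point_inj.
  by rewrite eT_agree ?blowup_line.
pose phi z : {ffun 'I_h -> 'I_k * 'I_m} := [ffun x => line_point z (psi z x)].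
have phi_line z z' x y x' y' : c x != c y ->
    phi z x = phi z' x' -> phi z y = phi z' y' -> z = z'.
  by move=> cxy; rewrite !ffunE; apply: line_point_line; rewrite !(proj2 (psiP z)).
exists [seq phi z | z <- enum {: 'I_M * 'I_M}]; split.
- move=> _ /mapP [z _ ->]; have [[psi_inj psi_edge] _] := psiP z.
  split=> [x y|x y exy]; rewrite !ffunE; last exact: psi_edge.
  by move/line_point_inj/psi_inj.
- rewrite -map_comp map_inj_in_uniq ?enum_uniq // => z z' _ _ [V _].
  have /imsetP [x' _ Ex] : phi z x0 \in copy_vertices (phi z') by rewrite -V imset_f.
  have /imsetP [y' _ Ey] : phi z y0 \in copy_vertices (phi z') by rewrite -V imset_f.
  exact: phi_line c_x0y0 Ex Ey.
- by rewrite size_map -cardT card_prod card_ord.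
move=> u v euv; rewrite count_map; apply: count_le1_uniq (enum_uniq _) _ => z z' _ _ /=.
have uv : u.1 != v.1 by apply: contraTneq euv => uv; rewrite /blowup G_same_part.
move=> /imsetP [[x y] /= _ [Eu Ev]] /imsetP [[x' y'] /= _ [Eu' Ev']].
apply: (phi_line z z' x y x' y'); rewrite -?Eu -?Ev //.
by move: uv; rewrite Eu Ev !ffunE /= !(proj2 (psiP _)).
Qed.

End Blowup.

Lemma leq_double_divn (m d D : nat) : 0 < d -> d <= D -> 2 * D <= m ->
  m <= 2 * D * (m %/ d).
Proof.
move=> d_gt0 d_le D_le; have d_le_m : d <= m by lia.
have := divn_gt0 m d_gt0; rewrite d_le_m.
have := ltn_pmod m d_gt0; have := divn_eq m d; nia.
Qed.

Lemma scaled_square_le (X m M : nat) : 0 < X -> m <= X * M ->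
  (/ INR X ^ 2 * INR m ^ 2 <= INR (M * M))%R.
Proof.
move=> /ltP/lt_0_INR X_gt0 /leP/le_INR; rewrite mult_INR => m_le.
rewrite mult_INR; apply: (Rmult_le_reg_l (INR X ^ 2)); first exact: pow_lt.
rewrite -Rmult_assoc Rinv_r ?Rmult_1_l; last by apply: pow_nonzero; lra.
have := pos_INR m; nra.
Qed.

Theorem lemma2p1 :
  forall h : nat, 2 <= h ->
  exists (m0 : nat) (gamma : R), Rlt 0 gamma /\
  forall (eH : rel 'I_h), oriented eH ->
  forall k : nat, 2 <= k -> k <= h ->
  forall (eD : rel 'I_k), oriented eD ->
  forall (c : 'I_h -> 'I_k), proper_coloring eH c ->
  (forall i j, eD i j -> arrow eH (fun x => c x == i) (fun x => c x == j)) ->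
  forall m : nat, m0 <= m ->
  exists eF : rel ('I_k * 'I_m),
    kpartite_tournament eF /\
    (forall i j, eD i j -> arrow eF (fun u => u.1 == i) (fun u => u.1 == j)) /\
    forall eT : rel ('I_k * 'I_m), completion eF eT ->
    exists s : seq {ffun 'I_h -> 'I_k * 'I_m},
      (forall phi, phi \in s -> is_copy eH eT phi) /\
      uniq [seq (copy_vertices phi, copy_edges eH phi) | phi <- s] /\
      Rle (Rmult gamma (pow (INR m) 2)) (INR (size s)) /\
      (forall u v, eF u v ->
         count (fun phi => (u, v) \in copy_edges eH phi) s <= 1).
Proof.
move=> h h2; have [n gadget_copy] := gadget_completion_copy h.
pose P := {ffun 'I_(h + h) -> 'I_n.+1}.
have P_gt0 : 0 < #|P| by apply/card_gt0P; exists [ffun=> ord0].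
have X_gt0 : 0 < 2 * h * #|P| by rewrite !muln_gt0 P_gt0 andbT; lia.
exists (2 * h * #|P|), (/ INR (2 * h * #|P|) ^ 2)%R; split.
  by apply/Rinv_0_lt_compat/pow_lt/lt_0_INR/ltP.
move=> eH oH k k2 kh eD oD c pc resp m m_ge.
have h2' : 1 < #|'I_h| by rewrite card_ord.
have [c' [x0 [y0 [pc' resp' c'_x0y0]]]] :=
  exists_nonconstant_coloring k2 h2' oD pc resp.
have G_copy := gadget_copy k eH eD c' kh oH pc' resp'.
exists (blowup (gadget eH eD c') P_gt0 (m := m)); split.
  exact/blowup_kpartite/gadget_total/(gadget_anti oD)/gadget_same_part.
split; first by move=> i j; apply/blowup_respects/gadget_respects.
move=> eT /(blowup_completion_copies (gadget_same_part eH eD c') G_copy c'_x0y0).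
move=> [s [copies uniq_s size_s disjoint]]; exists s; do 3!split=> //.
rewrite size_s; apply: scaled_square_le; rewrite // -[2 * h * _]mulnA.
by apply: leq_double_divn; rewrite ?mulnA // ?muln_gt0 ?P_gt0 ?leq_mul2r ?kh ?orbT; lia.
Qed.
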